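(* Let $r\ge1$ and $f,g\in H^r(\mathbb{T})$. Then $$\big\||\partial_x|^{-2}\big[(|\partial_x|g)(|\partial_x|f)\big]\big\|_r\le C\|f\|_r\|g\|_r,$$ with a constant $C$ depending only on $r$.
   Context: $\mathbb{T}=[-\pi,\pi]$ periodic; $\widehat f_k=\frac1{2\pi}\int_{\mathbb T}f(x)e^{-ikx}dx$; $\|f\|_r^2=\sum_k(1+k^2)^r|\widehat f_k|^2$ is the $H^r$ norm. For $\alpha\in\mathbb R$, $|\partial_x|^\alpha f=\sum_{k\neq0}|k|^\alpha\widehat f_ke^{ikx}$. *)

From HB Require Import structures.
From mathcomp Require Import all_boot all_order all_algebra.
From mathcomp Require Import all_classical all_reals all_analysis.
From mathcomp Require Import complex.
Import Order.TTheory GRing.Theory Num.Theory.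
Import numFieldNormedType.Exports.

Set Implicit Arguments.
Unset Strict Implicit.
Unset Printing Implicit Defensive.

Local Open Scope ring_scope.
Local Open Scope complex_scope.
Local Open Scope classical_set_scope.

Section Fourier.
Variable R : realType.

(* The torus T = [-pi, pi]; functions on T are functions R -> R[i],
   only their values on [-pi, pi] matter. *)
Definition torus : set R := `[(- pi)%R, pi]%classic.

(* Fourier coefficient  fhat_k = 1/(2 pi) \int_T f(x) e^{-ikx} dx,
   written out in real and imaginary parts
   (f e^{-ikx} = (a cos + b sin) + i (b cos - a sin) with f = a + i b). *)
Definition fhat (f : R -> R[i]) (k : int) : R[i] :=
  let a x := complex.Re (f x) in
  let b x := complex.Im (f x) in
  let kx x := (k%:~R * x)%R in
  ((2 * pi)^-1)%R%:C *
  (Rintegral (@lebesgue_measure R) torus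
      (fun x => a x * cos (kx x) + b x * sin (kx x))%R
   +i*
   Rintegral (@lebesgue_measure R) torus
      (fun x => b x * cos (kx x) - a x * sin (kx x))%R).

Definition Hsnorm2 (r : R) (c : int -> R[i]) : \bar R :=
  (\esum_(k in [set: int])
     (((1 + (k%:~R : R) ^+ 2) `^ r) *
      ((complex.Re (c k)) ^+ 2 + (complex.Im (c k)) ^+ 2))%:E)%E.

Definition Hnorm (r : R) (c : int -> R[i]) : \bar R :=
  match Hsnorm2 r c with
  | EFin x => (Num.sqrt x)%:E
  | y => y
  end.

(* f is in H^r(T): f is (Lebesgue) integrable on T (so that its Fourier
   coefficients are defined) and its H^r norm is finite. *)
Definition inHr (r : R) (f : R -> R[i]) : Prop :=
  (@lebesgue_measure R).-integrable torus (EFin \o (fun x => complex.Re (f x))) /\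
  (@lebesgue_measure R).-integrable torus (EFin \o (fun x => complex.Im (f x))) /\
  (Hnorm r (fhat f) < +oo)%E.

(* sum over Z of a complex sequence, as the limit of the symmetric
   partial sums  sum_{|j| <= N} a_j  (real and imaginary parts). *)
Definition zpartial (a : int -> R[i]) (N : nat) : R[i] :=
  \sum_(i < (2 * N).+1) a (i%:Z - N%:Z).

Definition zsum (a : int -> R[i]) : R[i] :=
  limn (fun N => complex.Re (zpartial a N)) +i*
  limn (fun N => complex.Im (zpartial a N)).

(* Fourier multiplier |d_x|^alpha on coefficients: zero mode removed *)
Definition absD (alpha : R) (c : int -> R[i]) (k : int) : R[i] :=
  if k == 0 then 0 else ((`|k|%:~R : R) `^ alpha)%:C * c k.

(* Fourier coefficients of the product of two functions with
   coefficients c and d (convolution). *)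
Definition fconv (c d : int -> R[i]) (k : int) : R[i] :=
  zsum (fun j => c (k - j) * d j).

End Fourier.

From mathcomp Require Import all_boot all_order all_algebra.
From mathcomp Require Import all_classical all_reals all_analysis.
From mathcomp Require Import complex.
From mathcomp Require Import zify ring lra.
Import Order.TTheory GRing.Theory Num.Theory.
Import numFieldNormedType.Exports.

Set Implicit Arguments.
Unset Strict Implicit.
Unset Printing Implicit Defensive.
Local Open Scope ring_scope.

(* For k <> 0 the k-th Fourier coefficient of |d|^-2 [(|d| g)(|d| f)] is
   k^-2 sum_j |k - j| |j| ghat(k - j) fhat(j).  Peetre's inequality
   1 + k^2 <= 2 (1 + (k - j)^2) (1 + j^2), together with 1 + k^2 <= 2 k^2 and
   r >= 1, gives
     (1 + k^2)^r |k - j|^2 |j|^2 <= 2^r k^2 (1 + (k - j)^2)^r (1 + j^2)^r,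
   so by Cauchy-Schwarz (1 + k^2)^r |sum_j ...|^2 <= C k^2 ||f||_r^2 ||g||_r^2,
   the same bound making the series absolutely convergent.  The factor k^-4
   leaves sum_(k <> 0) k^-2 <= 4, and |d|^-2 removes the zero mode. *)

Section CauchySchwarz.
Variable R : realFieldType.

Lemma cauchy_schwarz_pointwise (I : Type) (s : seq I) (t P Q : I -> R) :
  (forall i, 0 <= t i) -> (forall i, 0 <= P i) -> (forall i, 0 <= Q i) ->
  (forall i, t i ^+ 2 <= P i * Q i) ->
  (\sum_(i <- s) t i) ^+ 2 <= (\sum_(i <- s) P i) * (\sum_(i <- s) Q i).
Proof.
move=> t0 P0 Q0 tPQ.
have amgm i j : 2 * (t i * t j) <= P i * Q j + P j * Q i.
  have u0 : 0 <= P i * Q j by rewrite mulr_ge0.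
  have v0 : 0 <= P j * Q i by rewrite mulr_ge0.
  have tt_le : (t i * t j) ^+ 2 <= (P i * Q j) * (P j * Q i).
    rewrite exprMn [leRHS](_ : _ = P i * Q i * (P j * Q j)); last by ring.
    exact: ler_pM (sqr_ge0 _) (sqr_ge0 _) (tPQ i) (tPQ j).
  rewrite -ler_sqr ?nnegrE ?addr_ge0 ?mulr_ge0 //.
  have := sqr_ge0 (P i * Q j - P j * Q i); nra.
rewrite -(ler_pM2l (ltr0n R 2)) expr2 !big_distrlr /= mulr_sumr.
have -> : 2 * \sum_(i <- s) \sum_(j <- s) P i * Q j =
          \sum_(i <- s) \sum_(j <- s) (P i * Q j + P j * Q i).
  under [RHS]eq_bigr => i _ do rewrite big_split.
  rewrite big_split /= [X in _ = _ + X]exchange_big /=.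
  by rewrite mulr_natl mulr2n.
apply: ler_sum => i _; rewrite mulr_sumr; apply: ler_sum => j _; exact: amgm.
Qed.

End CauchySchwarz.

Section SymmetricSums.
Variable R : realType.
Local Open Scope classical_set_scope.

Definition symsum (h : int -> R) (N : nat) : R :=
  \sum_(0 <= i < (2 * N).+1) h (i%:Z - N%:Z).

Lemma symsumS h N : symsum h N.+1 = h (- N.+1%:Z) + symsum h N + h N.+1%:Z.
Proof.
rewrite /symsum (_ : (2 * N.+1).+1 = (2 * N).+3); last by lia.
rewrite big_nat_recl // big_nat_recr //= addrA.
congr (_ + _ + _); last (by congr h; lia); first (by congr h; lia).
by apply: eq_bigr => i _; congr h; lia.
Qed.

Lemma symsum_ge0 h N : (forall k, 0 <= h k) -> 0 <= symsum h N.
Proof. by move=> h0; apply: sumr_ge0. Qed.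

Lemma ler_symsum f g N : (forall k, f k <= g k) -> symsum f N <= symsum g N.
Proof. by move=> fg; apply: ler_sum. Qed.

Lemma symsumZ c h N : symsum (fun k => c * h k) N = c * symsum h N.
Proof. by rewrite /symsum mulr_sumr. Qed.

Lemma symsum_cauchy_schwarz t P Q N :
  (forall k, 0 <= t k) -> (forall k, 0 <= P k) -> (forall k, 0 <= Q k) ->
  (forall k, t k ^+ 2 <= P k * Q k) ->
  symsum t N ^+ 2 <= symsum P N * symsum Q N.
Proof. by move=> t0 P0 Q0 tPQ; apply: cauchy_schwarz_pointwise. Qed.

Lemma nondecreasing_symsum h : (forall k, 0 <= h k) -> nondecreasing_seq (symsum h).
Proof.
move=> h0; apply/nondecreasing_seqP => N; rewrite symsumS.
by have := h0 (- N.+1%:Z); have := h0 N.+1%:Z; lra.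
Qed.

Definition box (N : nat) : set int := [set j | (`|j| <= N)%N].

Lemma box_image N : box N = (fun i : nat => i%:Z - N%:Z) @` `I_((2 * N).+1).
Proof.
apply/seteqP; split => [j /= jN | _ [i /= iN <-]]; last by rewrite /box /=; lia.
by rewrite /box /= in jN; exists (absz (j + N%:Z)) => /=; lia.
Qed.

Lemma finite_box N : finite_set (box N).
Proof. by rewrite box_image; apply/finite_image/finite_II. Qed.

Lemma fsbig_box h N : (\sum_(j \in box N) (h j)%:E)%E = (symsum h N)%:E.
Proof.
rewrite box_image fsbig_image; last by move=> x y _ _ /=; lia.
by rewrite -fsbig_ord sumEFin /symsum big_mkord.
Qed.

Lemma symsum_le_esum h N :
  ((symsum h N)%:E <= \esum_(k in [set: int]) (h k)%:E)%E.
Proof.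
rewrite -fsbig_box; apply: esum_ge.
by exists (box N) => //; split => //; exact: finite_box.
Qed.

Lemma esum_le_symsum_bound h M : (forall k, 0 <= h k) ->
  (forall N, symsum h N <= M) -> (\esum_(k in [set: int]) (h k)%:E <= M%:E)%E.
Proof.
move=> h0 hM; apply: ge_ereal_sup => _ [X [finX _] <-].
pose N := (\max_(x <- finmap.enum_fset (fset_set X)) `|x|)%N.
have XN : X `<=` box N.
  move=> x Xx; apply: (@leq_bigmax_seq _ _ xpredT (fun y : int => `|y|%N) x) => //.
  by rewrite in_fset_set // inE.
apply: le_trans (_ : (\sum_(j \in box N) (h j)%:E <= _)%E); last by rewrite fsbig_box lee_fin.
apply: lee_fsum_nneg_subset => //; [exact: finite_box | by move=> x; rewrite !inE; exact: XN |].
by move=> k _; rewrite lee_fin.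
Qed.

Lemma esum_int_reflect (F : int -> \bar R) (k : int) :
  (\esum_(j in [set: int]) F j = \esum_(j in [set: int]) F (k - j)%R)%E.
Proof.
apply: reindex_esum; split => // [x y _ _ /= /addrI /oppr_inj //|y _].
by exists (k - y) => //=; rewrite opprB addrC subrK.
Qed.

Lemma is_cvg_symsum (g : int -> R) D :
  (forall N, symsum (fun j => `|g j|) N <= D) -> cvgn (symsum g).
Proof.
move=> gD.
have -> : symsum g =
    (fun N => symsum (fun j => `|g j| + g j) N - symsum (fun j => `|g j|) N).
  by apply/funext => N; rewrite /symsum big_split /= [RHS]addrC addKr.
have absg0 k : 0 <= `|g k| + g k by rewrite -lerBlDr sub0r -normrN ler_norm.
apply: is_cvgB; apply: nondecreasing_is_cvgn.
- exact: nondecreasing_symsum.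
- exists (2 * D) => _ [N _ <-]; rewrite /symsum big_split /= mulr2n mulrDl mul1r.
  apply: lerD; first exact: gD.
  by apply: le_trans (gD N); apply: ler_sum => i _; exact: ler_norm.
- exact: nondecreasing_symsum.
- by exists D => _ [N _ <-].
Qed.

Lemma symsum_invsqr_le N : symsum (fun k => (k%:~R : R) ^- 2) N <= 4 - 4 / N.+1%:R.
Proof.
elim: N => [|N IH]; first by rewrite /symsum big_nat1 /= expr0n invr0 divr1 subrr.
move: IH; set n : R := N.+1%:R => IH.
have n1 : 1 <= n by rewrite ler1n.
have castN : ((N.+1%:Z)%:~R : R) ^- 2 = n ^- 2 by rewrite /n pmulrn.
have castNN : ((- N.+1%:Z)%:~R : R) ^- 2 = n ^- 2 by rewrite rmorphN sqrrN castN.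
rewrite symsumS castN castNN -[N.+2%:R]natr1 -/n.
have telescope : n ^- 2 + n ^- 2 <= 4 / n - 4 / (n + 1).
  rewrite (_ : 4 / n - _ = 4 / (n * (n + 1))); last by field; rewrite !gt_eqF //; lra.
  rewrite (_ : n ^- 2 + n ^- 2 = 2 / n ^+ 2); last by rewrite mulrDl mul1r.
  rewrite ler_pdivrMr ?exprn_gt0 1?mulrAC ?ler_pdivlMr ?mulr_gt0 //; try lra.
  nra.
rewrite addrAC addrC; apply: le_trans (lerD IH telescope) _.
by rewrite addrA subrK.
Qed.

Lemma esum_invsqr_le (c : R) : 0 <= c ->
  (\esum_(k in [set: int]) (c * (k%:~R : R) ^- 2)%:E <= (4 * c)%:E)%E.
Proof.
move=> c0; apply: esum_le_symsum_bound => [k|N]; first by rewrite mulr_ge0 ?invr_ge0 ?sqr_ge0.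
rewrite /symsum -mulr_sumr mulrC ler_wpM2r //.
by apply: le_trans (symsum_invsqr_le N) _; rewrite gerBl divr_ge0.
Qed.

End SymmetricSums.

Section ComplexL1Norm.
Variable R : rcfType.
Local Open Scope complex_scope.

(* [zsum] is defined through real and imaginary parts separately, so complex
   numbers are estimated through the submultiplicative l1 norm, which is within
   a factor 2 of the squared modulus. *)
Definition l1c (z : R[i]) : R := `|complex.Re z| + `|complex.Im z|.

Definition sqnormc (z : R[i]) : R := complex.Re z ^+ 2 + complex.Im z ^+ 2.

Lemma l1c_ge0 z : 0 <= l1c z.
Proof. by rewrite addr_ge0. Qed.

Lemma sqnormc_ge0 z : 0 <= sqnormc z.
Proof. by rewrite addr_ge0 ?sqr_ge0. Qed.

Lemma sqnormc_le_l1c z : sqnormc z <= l1c z ^+ 2.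
Proof.
rewrite /sqnormc /l1c -[complex.Re z ^+ 2]real_normK ?num_real //.
rewrite -[complex.Im z ^+ 2]real_normK ?num_real //.
by have := mulr_ge0 (normr_ge0 (complex.Re z)) (normr_ge0 (complex.Im z)); nra.
Qed.

Lemma l1c_sqr_le z : l1c z ^+ 2 <= 2 * sqnormc z.
Proof.
rewrite /sqnormc /l1c -[complex.Re z ^+ 2]real_normK ?num_real //.
rewrite -[complex.Im z ^+ 2]real_normK ?num_real //.
by have := sqr_ge0 (`|complex.Re z| - `|complex.Im z|); nra.
Qed.

Lemma l1cM u v : l1c (u * v) <= l1c u * l1c v.
Proof.
case: u v => [a b] [c d]; rewrite /l1c /=.
have := ler_normB (a * c) (b * d); have := ler_normD (a * d) (b * c).
rewrite !normrM; nra.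
Qed.

Lemma l1c_scale (s : R) z : l1c (s%:C * z) = `|s| * l1c z.
Proof. by case: z => a b; rewrite /l1c /= !mul0r subr0 addr0 !normrM mulrDr. Qed.

Lemma sqnormc_scale (s : R) z : sqnormc (s%:C * z) = s ^+ 2 * sqnormc z.
Proof. by case: z => a b; rewrite /sqnormc /= !mul0r subr0 addr0 !exprMn mulrDr. Qed.

Lemma Re_sum (I : Type) (s : seq I) (F : I -> R[i]) :
  complex.Re (\sum_(i <- s) F i) = \sum_(i <- s) complex.Re (F i).
Proof.
elim: s => [|a s IH]; first by rewrite !big_nil.
by rewrite !big_cons -IH; case: (F a) => ? ?; case: (\sum_(j <- s) F j).
Qed.

Lemma Im_sum (I : Type) (s : seq I) (F : I -> R[i]) :
  complex.Im (\sum_(i <- s) F i) = \sum_(i <- s) complex.Im (F i).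
Proof.
elim: s => [|a s IH]; first by rewrite !big_nil.
by rewrite !big_cons -IH; case: (F a) => ? ?; case: (\sum_(j <- s) F j).
Qed.

End ComplexL1Norm.

Section Weights.
Variable R : realType.

Lemma peetre_le (x y : R) : 1 + (x + y) ^+ 2 <= 2 * ((1 + x ^+ 2) * (1 + y ^+ 2)).
Proof. by have := sqr_ge0 (x * y - 1); have := mulr_ge0 (sqr_ge0 x) (sqr_ge0 y); nra. Qed.

Lemma powR_subr1 (a r : R) : 0 < a -> a `^ r = a `^ (r - 1) * a.
Proof.
move=> a0; rewrite -[in LHS](subrK 1 r) (@powRD _ a (r - 1) 1) ?powRr1 ?(ltW a0) //.
by apply/implyP => _; rewrite gt_eqF.
Qed.

Lemma peetre_powR_le (r x y : R) : 1 <= r -> 1 <= (x + y) ^+ 2 ->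
  (1 + (x + y) ^+ 2) `^ r * (x ^+ 2 * y ^+ 2) <=
  2 `^ r * (x + y) ^+ 2 * ((1 + x ^+ 2) `^ r * (1 + y ^+ 2) `^ r).
Proof.
move=> r1; set s := (x + y) ^+ 2 => s1.
set u := 1 + x ^+ 2; set v := 1 + y ^+ 2; set w := 2 * (u * v).
have u1 : 1 <= u by rewrite lerDl sqr_ge0.
have v1 : 1 <= v by rewrite lerDl sqr_ge0.
have w0 : 0 < w by rewrite !mulr_gt0 //; lra.
have xy_uv : x ^+ 2 * y ^+ 2 <= u * v by rewrite ler_pM ?sqr_ge0 ?lerDr.
have base : (1 + s) `^ r <= w `^ (r - 1) * (2 * s).
  rewrite powR_subr1; last lra.
  apply: ler_pM; rewrite ?powR_ge0 //; try lra.
  by apply: ge0_ler_powR; rewrite ?nnegrE ?subr_ge0 ?(ltW w0) ?peetre_le //; lra.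
have -> : 2 `^ r * s * (u `^ r * v `^ r) = w `^ (r - 1) * (2 * s) * (u * v).
  have wr : w `^ r = 2 `^ r * (u `^ r * v `^ r).
    by rewrite !powRM ?mulr_ge0 //; lra.
  by rewrite mulrAC -wr (powR_subr1 r w0) /w; ring.
exact: ler_pM (powR_ge0 _ _) (mulr_ge0 (sqr_ge0 _) (sqr_ge0 _)) base xy_uv.
Qed.

End Weights.

Section FourierCoefficients.
Variable R : realType.

Lemma l1c_absD1 (c : int -> R[i]) m : l1c (absD 1 c m) = `|(m%:~R : R)| * l1c (c m).
Proof.
rewrite /absD; case: eqP => [->|_]; first by rewrite /l1c /= !normr0 mul0r addr0.
by rewrite l1c_scale powRr1 ?intr_norm ?normr_id ?normr_ge0.
Qed.

(* At [k = 0] both sides vanish, the right one because [0^-1 = 0]. *)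
Lemma sqnormc_absDN2 (c : int -> R[i]) k :
  sqnormc (absD (-2) c k) = ((k%:~R : R) ^- 2) ^+ 2 * sqnormc (c k).
Proof.
rewrite /absD; case: eqP => [->|_].
  by rewrite /sqnormc /= expr0n invr0 !expr0n mul0r addr0.
by rewrite sqnormc_scale powRN -[2]/(2%:R) powR_mulrn ?intr_norm ?real_normK ?num_real.
Qed.

Lemma l1c_absD1M_le (c d : int -> R[i]) m n :
  l1c (absD 1 c m * absD 1 d n) <=
    `|(m%:~R : R)| * `|(n%:~R : R)| * (l1c (c m) * l1c (d n)).
Proof. by apply: le_trans (l1cM _ _) _; rewrite !l1c_absD1 mulrACA. Qed.

Lemma l1c_zsum_le (x : int -> R[i]) D :
  (forall N, symsum (fun j => l1c (x j)) N <= D) -> l1c (zsum x) <= D.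
Proof.
move=> xD; rewrite /zsum /l1c /=.
have -> : (fun N => complex.Re (zpartial x N)) = symsum (fun j => complex.Re (x j)).
  by apply/funext => N; rewrite /zpartial Re_sum /symsum big_mkord.
have -> : (fun N => complex.Im (zpartial x N)) = symsum (fun j => complex.Im (x j)).
  by apply/funext => N; rewrite /zpartial Im_sum /symsum big_mkord.
have [cvRe cvIm] : cvgn (symsum (fun j => complex.Re (x j))) /\
                   cvgn (symsum (fun j => complex.Im (x j))).
  split; apply: (@is_cvg_symsum _ _ D) => N; apply: le_trans (xD N); apply: ler_sum => i _.
    by rewrite lerDl normr_ge0.
  by rewrite lerDr normr_ge0.
rewrite -(cvg_lim _ (cvgD (cvg_norm cvRe) (cvg_norm cvIm))) //.
apply: limr_le; first exact: is_cvgD (is_cvg_norm cvRe) (is_cvg_norm cvIm).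
near=> N; apply: le_trans (xD N); rewrite /symsum big_split /=.
by apply: lerD; exact: ler_norm_sum.
Unshelve. all: end_near.
Qed.

End FourierCoefficients.

Section SobolevNorm.
Variables (R : realType) (r : R).

Definition Hweight (k : int) : R := (1 + (k%:~R : R) ^+ 2) `^ r.

Lemma Hweight_gt0 k : 0 < Hweight k.
Proof. by apply: powR_gt0; rewrite ltr_pwDl ?sqr_ge0. Qed.

Lemma Hsnorm2_ge0 (c : int -> R[i]) : (0 <= Hsnorm2 r c)%E.
Proof. by apply: esum_ge0 => k _; rewrite lee_fin mulr_ge0 ?powR_ge0 ?sqnormc_ge0. Qed.

Lemma symsum_le_Hsnorm2 (c : int -> R[i]) A N : Hsnorm2 r c = A%:E ->
  symsum (fun j => Hweight j * sqnormc (c j)) N <= A.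
Proof. by move=> cA; rewrite -lee_fin -cA; exact: symsum_le_esum. Qed.

Lemma symsum_reflect_le_Hsnorm2 (c : int -> R[i]) A k N : Hsnorm2 r c = A%:E ->
  symsum (fun j => Hweight (k - j) * sqnormc (c (k - j))) N <= A.
Proof.
move=> cA; rewrite -lee_fin -cA /Hsnorm2 (esum_int_reflect _ k).
exact: symsum_le_esum.
Qed.

Lemma Hweight_l1c_le k (z : R[i]) :
  Hweight k * l1c z ^+ 2 <= 2 * (Hweight k * sqnormc z).
Proof.
by rewrite [leRHS]mulrCA; apply: (ler_wpM2l (ltW (Hweight_gt0 k))); exact: l1c_sqr_le.
Qed.

Lemma Hnorm_finite (c : int -> R[i]) : (Hnorm r c < +oo)%E ->
  exists A, [/\ 0 <= A, Hsnorm2 r c = A%:E & Hnorm r c = (Num.sqrt A)%:E].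
Proof.
rewrite /Hnorm; have := Hsnorm2_ge0 c.
by case: (Hsnorm2 r c) => [A| |] //= A0 _; exists A.
Qed.

Lemma Hnorm_le_sqrt (c : int -> R[i]) M : (Hsnorm2 r c <= M%:E)%E ->
  (Hnorm r c <= (Num.sqrt M)%:E)%E.
Proof.
rewrite /Hnorm; have := Hsnorm2_ge0 c.
by case: (Hsnorm2 r c) => [X| |] //=; rewrite !lee_fin => _ /ler_wsqrtr.
Qed.

End SobolevNorm.

Section ProductEstimate.
Variables (R : realType) (r : R).
Hypothesis r_ge1 : 1 <= r.

Lemma Hweight_conv_le (k j : int) : k != 0 ->
  Hweight r k * (`|((k - j)%:~R : R)| * `|(j%:~R : R)|) ^+ 2 <=
    2 `^ r * (k%:~R : R) ^+ 2 * (Hweight r (k - j) * Hweight r j).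
Proof.
move=> k0; rewrite exprMn !real_normK ?num_real //.
have := @peetre_powR_le _ r ((k - j)%:~R) (j%:~R) r_ge1.
rewrite -rmorphD /= subrK; apply.
rewrite -real_normK ?num_real // -intr_norm.
have : 1 <= (`|k|%:~R : R) by rewrite ler1z -gtz0_ge1 normr_gt0.
nra.
Qed.

Lemma symsum_conv_le (a b : int -> R[i]) A B k N :
  Hsnorm2 r a = A%:E -> Hsnorm2 r b = B%:E -> k != 0 ->
  Hweight r k * symsum (fun j => `|((k - j)%:~R : R)| * `|(j%:~R : R)| *
                                 (l1c (b (k - j)) * l1c (a j))) N ^+ 2 <=
    4 * 2 `^ r * (k%:~R : R) ^+ 2 * A * B.
Proof.
move=> aA bB k0.
have Hw0 j : 0 <= Hweight r j by exact/ltW/Hweight_gt0.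
have Hk := Hweight_gt0 r k.
set c := 2 `^ r * (k%:~R : R) ^+ 2 / Hweight r k.
have c0 : 0 <= c by rewrite /c divr_ge0 // mulr_ge0 ?powR_ge0 // sqr_ge0.
set t := fun j => _.
pose P j := c * (Hweight r (k - j) * l1c (b (k - j)) ^+ 2).
pose Q j := Hweight r j * l1c (a j) ^+ 2.
have t0 j : 0 <= t j by rewrite !mulr_ge0 ?l1c_ge0.
have P0 j : 0 <= P j := mulr_ge0 c0 (mulr_ge0 (Hw0 _) (sqr_ge0 _)).
have Q0 j : 0 <= Q j := mulr_ge0 (Hw0 _) (sqr_ge0 _).
have tPQ j : t j ^+ 2 <= P j * Q j.
  rewrite -(ler_pM2l Hk) /t exprMn mulrA.
  have -> : Hweight r k * (P j * Q j) = 2 `^ r * (k%:~R : R) ^+ 2 *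
      (Hweight r (k - j) * Hweight r j) * (l1c (b (k - j)) * l1c (a j)) ^+ 2.
    by rewrite /P /Q /c; field; rewrite gt_eqF.
  by apply: ler_wpM2r; [exact: sqr_ge0 | exact: Hweight_conv_le].
have SP : symsum P N <= c * (2 * B).
  rewrite symsumZ; apply: (ler_wpM2l c0).
  apply: le_trans (ler_symsum _ (fun j => Hweight_l1c_le _ _ _)) _.
  rewrite symsumZ; apply: (ler_wpM2l (ler0n _ 2)); exact: symsum_reflect_le_Hsnorm2 bB.
have SQ : symsum Q N <= 2 * A.
  apply: le_trans (ler_symsum _ (fun j => Hweight_l1c_le _ _ _)) _.
  rewrite symsumZ; apply: (ler_wpM2l (ler0n _ 2)); exact: symsum_le_Hsnorm2 aA.
have CS := le_trans (symsum_cauchy_schwarz N t0 P0 Q0 tPQ)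
  (ler_pM (symsum_ge0 _ P0) (symsum_ge0 _ Q0) SP SQ).
apply: le_trans (ler_wpM2l (ltW Hk) CS) _.
suff -> : Hweight r k * (c * (2 * B) * (2 * A)) = 4 * 2 `^ r * (k%:~R : R) ^+ 2 * A * B by [].
by rewrite /c; field; rewrite gt_eqF.
Qed.

Lemma conv_coef_bound (a b : int -> R[i]) A B k :
  Hsnorm2 r a = A%:E -> Hsnorm2 r b = B%:E -> k != 0 ->
  Hweight r k * sqnormc (fconv (absD 1 b) (absD 1 a) k) <=
    4 * 2 `^ r * (k%:~R : R) ^+ 2 * A * B.
Proof.
move=> aA bB k0; have Hk := Hweight_gt0 r k.
have K0 : 0 <= 4 * 2 `^ r * (k%:~R : R) ^+ 2 * A * B.
  by apply: le_trans (symsum_conv_le 0 aA bB k0); rewrite mulr_ge0 ?sqr_ge0 ?(ltW Hk).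
rewrite mulrC -ler_pdivlMr //; apply: le_trans (sqnormc_le_l1c _) _.
rewrite -[leRHS]sqr_sqrtr ?divr_ge0 ?(ltW Hk) // ler_sqr ?nnegrE ?l1c_ge0 ?sqrtr_ge0 //.
apply: l1c_zsum_le => N; apply: le_trans (ler_symsum _ (fun j => l1c_absD1M_le _ _ _ _)) _.
rewrite -[symsum _ N]ger0_norm; last by apply: symsum_ge0 => j; rewrite !mulr_ge0 ?l1c_ge0.
by rewrite -sqrtr_sqr ler_wsqrtr // ler_pdivlMr // mulrC symsum_conv_le.
Qed.

End ProductEstimate.

Theorem lemma5 (R : realType) (r : R) (hr : 1 <= r) :
  exists C : R, 0 < C /\
    forall f g : R -> R[i], inHr r f -> inHr r g ->
      (Hnorm r (absD (-2) (fconv (absD 1 (fhat g)) (absD 1 (fhat f))))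
        <= C%:E * Hnorm r (fhat f) * Hnorm r (fhat g))%E.
Proof.
exists (Num.sqrt (16 * 2 `^ r)); split; first by rewrite sqrtr_gt0 mulr_gt0 ?powR_gt0.
move=> f g [_ [_ /Hnorm_finite [A [A0 fA ->]]]] [_ [_ /Hnorm_finite [B [B0 gB ->]]]].
set cv := fconv _ _.
have coef_le k : Hweight r k * sqnormc (absD (-2) cv k) <=
                 4 * 2 `^ r * A * B * (k%:~R : R) ^- 2.
  rewrite sqnormc_absDN2 mulrCA.
  have [->|k0] := eqVneq k 0; first by rewrite /= expr0n invr0 expr0n !mul0r mulr0.
  apply: le_trans (ler_wpM2l (sqr_ge0 _) (conv_coef_bound hr fA gB k0)) _.
  suff -> : ((k%:~R : R) ^- 2) ^+ 2 * (4 * 2 `^ r * (k%:~R : R) ^+ 2 * A * B) =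
            4 * 2 `^ r * A * B * (k%:~R : R) ^- 2 by [].
  by field; rewrite intr_eq0.
have : (Hsnorm2 r (absD (-2) cv) <= (4 * (4 * 2 `^ r * A * B))%:E)%E.
  apply: le_trans (esum_invsqr_le _); last by rewrite !mulr_ge0 ?powR_ge0.
  by apply: le_esum => k _; rewrite lee_fin; exact: coef_le.
move=> /Hnorm_le_sqrt /le_trans; apply.
rewrite -!EFinM lee_fin -!sqrtrM ?mulr_ge0 ?powR_ge0 //.
suff -> : 4 * (4 * 2 `^ r * A * B) = 16 * 2 `^ r * A * B by [].
by ring.
Qed.
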